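(* Let $\mathcal L:\mathbb F^{q\times q}\to\mathbb F^{n\times n}$ be $*$-linear with matricization $L=[L_{ij}]$ and Choi matrix $\mathbb L$, and $m=\operatorname{rank}\mathbb L$. (a) For all $A_1,\ldots,A_m\in\mathbb F^{n\times q}$ with $\operatorname{span}\{A_1,\ldots,A_m\}=\operatorname{span}\{L_{ij}:1\le i\le n,1\le j\le q\}$, $\mathcal L$ admits a minimal Hill representation $\mathcal L(V)=\sum_{k,l=1}^m\mathbb H_{kl}A_lVA_k^*$ with some Hermitian $\mathbb H\in\mathbb F^{m\times m}$. More precisely: let $\lambda^{ij}_k$ be the unique scalars with $L_{ij}=\sum_{k=1}^m\lambda^{ij}_kA_k$ and let $L_k\in\mathbb F^{n\times q}$ have $(i,j)$ entry $\overline{\lambda^{ij}_k}$; then $L_1,\ldots,L_m$ span $\operatorname{span}\{L_{ij}\}$, the construction below applied to $L_1,\ldots,L_m$ returns exactly $A_1,\ldots,A_m$, the Hill matrix $\mathbb H=\mathbb H(\mathcal L;L_1,\ldots,L_m)$ gives such a representation, and $$\begin{bmatrix}L_1\\ \vdots\\ L_m\end{bmatrix}=(\mathbb H\otimes I_n)\begin{bmatrix}A_1\\ \vdots\\ A_m\end{bmatrix}.$$ (b) Conversely, if $\mathcal L(V)=\sum_{k,l=1}^m\mathbb H_{kl}A_lVA_k^*$ is a minimal Hill representation, then $\operatorname{span}\{A_1,\ldots,A_m\}=\operatorname{span}\{L_{ij}\}$.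
   Context: $\mathbb F\in\{\mathbb R,\mathbb C\}$; $\otimes$ Kronecker, $\circ$ Hadamard, $\vec{\mathbf 1}_p$ all-ones vector, $\overline X$ conjugate. Matricization $L\in\mathbb F^{n^2\times q^2}$ with $L\operatorname{vec}(V)=\operatorname{vec}(\mathcal L(V))$ (column-stacking), blocks $L_{ij}\in\mathbb F^{n\times q}$, $1\le i\le n$, $1\le j\le q$; Choi matrix $\mathbb L=[\mathcal L(\mathcal E^{(q)}_{ij})]_{i,j=1}^q$; $*$-linear: $\mathcal L(V^* )=\mathcal L(V)^*$. Hill representation: $\mathcal L(V)=\sum_{k,l=1}^m\mathbb H_{kl}A_lVA_k^*$ for all $V$; minimal if $m$ is smallest possible. Construction: for $L_1,\ldots,L_m$ spanning $\operatorname{span}\{L_{ij}\}$, let $L_{ij}=\sum_k\alpha^{ij}_kL_k$ (unique), $L_k=\sum_{i,j}\beta^k_{ij}L_{ij}$ (any choice); $A_k$ has $(i,j)$ entry $\overline{\alpha^{ij}_k}$, $B_k$ has $(i,j)$ entry $\beta^k_{ij}$, $\mathbb H(\mathcal L;L_1,\ldots,L_m)=[\vec{\mathbf 1}_n^*(B_k\circ\overline{L_l})\vec{\mathbf 1}_q]_{k,l=1}^m$. *)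

From HB Require Import structures.
From mathcomp Require Import all_boot all_order all_algebra.
Set Implicit Arguments. Unset Strict Implicit. Unset Printing Implicit Defensive.
Import GRing.Theory Num.Theory.
Local Open Scope ring_scope.

Section HillDefs.
Variable F : fieldType.
(* the conjugation of F : complex conjugation for F = C, identity for F = R *)
Variable cj : F -> F.

Definition ctr {r c : nat} (X : 'M[F]_(r, c)) : 'M[F]_(c, r) := map_mx cj X^T.

Variables (n q : nat).
Implicit Type L : 'M[F]_q -> 'M[F]_n.

Definition is_linear_map L :=
  forall (a : F) (U V : 'M[F]_q), L (a *: U + V) = a *: L U + L V.

Definition star_linear L := forall V : 'M[F]_q, L (ctr V) = ctr (L V).

(* Matricization L in F^{n^2 x q^2} with  L vec(V) = vec(L(V)),
   vec = column stacking.  In MathComp, mxvec is row stacking (index i*c+j),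
   so column stacking vec(V) is mxvec (V^T), which gives the formula below. *)
Definition matricization L : 'M[F]_(n * n, q * q) :=
  (lin_mx (fun W : 'M[F]_q => (L W^T)^T))^T.

(* block L_ij (i < n, j < q) of size n x q of the matricization: rows
   (i-1)n+1..in, columns (j-1)q+1..jq (0-based: i*n + a, j*q + b) *)
Definition Lblk L (i : 'I_n) (j : 'I_q) : 'M[F]_(n, q) :=
  \matrix_(a < n, b < q) matricization L (mxvec_index i a) (mxvec_index j b).

Definition choi L := \mxblock_(i < q, j < q) L (delta_mx i j).

Definition Lspan L : {vspace 'M[F]_(n, q)} :=
  <<[seq Lblk L ij.1 ij.2 | ij : 'I_n * 'I_q]>>%VS.

Definition spanA (m : nat) (A : 'I_m -> 'M[F]_(n, q)) : {vspace 'M[F]_(n, q)} :=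
  <<[seq A k | k : 'I_m]>>%VS.

Definition hill_rep L (m : nat) (A : 'I_m -> 'M[F]_(n, q)) (H : 'M[F]_m) :=
  forall V : 'M[F]_q,
    L V = \sum_(k < m) \sum_(l < m) H k l *: (A l *m V *m ctr (A k)).

Definition minimal_hill_rep L (m : nat) (A : 'I_m -> 'M[F]_(n, q)) (H : 'M[F]_m) :=
  hill_rep L A H /\
  forall (m' : nat) (A' : 'I_m' -> 'M[F]_(n, q)) (H' : 'M[F]_m'),
    hill_rep L A' H' -> (m <= m')%N.

Definition hadamard {r c : nat} (X Y : 'M[F]_(r, c)) : 'M[F]_(r, c) :=
  map2_mx *%R X Y.
Definition ones (p : nat) : 'cV[F]_p := const_mx 1.

(* Hill matrix  H(L; L_1..L_m) = [ 1_n^* (B_k o conj(L_l)) 1_q ]_{k,l},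
   where B_k (entries beta^k_ij) satisfies L_k = sum_{i,j} beta^k_ij L_ij *)
Definition hill_matrix (m : nat) (B : 'I_m -> 'M[F]_(n, q))
    (Ls : 'I_m -> 'M[F]_(n, q)) : 'M[F]_m :=
  \matrix_(k < m, l < m)
    (ctr (ones n) *m hadamard (B k) (map_mx cj (Ls l)) *m ones q) 0 0.

(* H (x) I_n, as the m x m block matrix with blocks H_kl I_n *)
Definition kron_I (m : nat) (H : 'M[F]_m) :=
  \mxblock_(k < m, l < m) ((H k l)%:M : 'M[F]_n).

Definition stack (m : nat) (A : 'I_m -> 'M[F]_(n, q)) := \mxcol_(k < m) A k.

End HillDefs.

Definition theorem5p8_body (F : fieldType) (cj : F -> F) : Prop :=
  forall (n q : nat) (L : 'M[F]_q -> 'M[F]_n),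
  is_linear_map L -> star_linear cj L ->
  forall m : nat, m = \rank (choi L) ->
  (forall A : 'I_m -> 'M[F]_(n, q), spanA A = Lspan L ->
     (forall (i : 'I_n) (j : 'I_q),
        (exists lam : 'I_m -> F, Lblk L i j = \sum_(k < m) lam k *: A k) /\
        (forall lam lam' : 'I_m -> F,
           Lblk L i j = \sum_(k < m) lam k *: A k ->
           Lblk L i j = \sum_(k < m) lam' k *: A k -> lam =1 lam')) /\
     forall lam : 'I_n -> 'I_q -> 'I_m -> F,
       (forall i j, Lblk L i j = \sum_(k < m) lam i j k *: A k) ->
       let Ls := fun k : 'I_m => \matrix_(i < n, j < q) cj (lam i j k) in
       spanA Ls = Lspan L /\
       (exists alpha : 'I_n -> 'I_q -> 'I_m -> F,
          forall i j, Lblk L i j = \sum_(k < m) alpha i j k *: Ls k) /\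
       (forall alpha : 'I_n -> 'I_q -> 'I_m -> F,
          (forall i j, Lblk L i j = \sum_(k < m) alpha i j k *: Ls k) ->
          forall k, \matrix_(i < n, j < q) cj (alpha i j k) = A k) /\
       (exists B : 'I_m -> 'M[F]_(n, q),
          forall k, Ls k = \sum_(i < n) \sum_(j < q) B k i j *: Lblk L i j) /\
       (forall B : 'I_m -> 'M[F]_(n, q),
          (forall k, Ls k = \sum_(i < n) \sum_(j < q) B k i j *: Lblk L i j) ->
          let H := hill_matrix cj B Ls in
          [/\ ctr cj H = H,
              minimal_hill_rep cj L A H &
              stack Ls = kron_I n H *m stack A])) /\
  (forall (m' : nat) (A : 'I_m' -> 'M[F]_(n, q)) (H : 'M[F]_m'),
     minimal_hill_rep cj L A H -> spanA A = Lspan L).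

From HB Require Import structures.
From mathcomp Require Import all_boot all_order all_algebra.
From mathcomp Require Import ring.
Set Implicit Arguments. Unset Strict Implicit. Unset Printing Implicit Defensive.
Import GRing.Theory Num.Theory.
Local Open Scope ring_scope.

(* The proof rests on three facts.
   1. Dimension: dim span{L_ij} = rank (Choi matrix), since the columns of the
      Choi matrix are the vectorizations of the blocks L_ij.
   2. Lower bound: in any Hill representation with A_1..A_m every block L_ij
      is a combination of the A_l, so span{L_ij} <= span{A_l} and
      m >= dim span{L_ij}.
   3. Construction: if A_1..A_m is a basis of span{L_ij}, write
      L_ij = sum_k lam^ij_k A_k.  *-linearity gives (L_ij)_(a,b) =
      conj (L_ab)_(i,j), i.e. L_ij = sum_k conj (A_k)_(i,j) L_k, so the L_k
      form another basis, and the coefficient comparison of the two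
      expansions shows that the Hill matrix H is Hermitian, satisfies
      L_k = sum_l H_kl A_l, and gives a Hill representation of L.
   Part (a) is 3 together with 1-2 (minimality); part (b) follows since a
   minimal representation has m = dim span{L_ij} terms (by 3 applied to any
   basis) and span{A_l} contains span{L_ij} (by 2). *)

Section Families.
Variables (F : fieldType) (vT : vectType F).

Lemma span_coef (T : finType) (f : T -> vT) v :
  v \in <<[seq f x | x : T]>>%VS -> exists c : T -> F, v = \sum_x c x *: f x.
Proof.
rewrite span_def big_map big_enum /= => /memv_sumP [vs Hvs ->].
have : forall x, exists k, vs x = k *: f x.
  by move=> x; apply/vlineP; apply: Hvs.
case/fin_all_exists => c hc; exists c.
by apply: eq_bigr => x _; rewrite hc.
Qed.

Lemma mem_span_fam (T : finType) (f : T -> vT) (c : T -> F) :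
  \sum_x c x *: f x \in <<[seq f x | x : T]>>%VS.
Proof.
apply: memv_suml => x _; apply: memvZ; apply: memv_span.
by apply/mapP; exists x; rewrite ?mem_enum.
Qed.

Lemma mem_fam (T : finType) (f : T -> vT) x : f x \in <<[seq f x | x : T]>>%VS.
Proof. by apply: memv_span; apply/mapP; exists x; rewrite ?mem_enum. Qed.

Lemma size_fam m (f : 'I_m -> vT) : size [seq f k | k : 'I_m] = m.
Proof. by rewrite size_map size_enum_ord. Qed.

Lemma dim_span_fam m (f : 'I_m -> vT) : (\dim <<[seq f k | k : 'I_m]>> <= m)%N.
Proof. by rewrite -[X in (_ <= X)%N](size_fam f) dim_span. Qed.

Lemma free_fam_dim m (f : 'I_m -> vT) :
  \dim <<[seq f k | k : 'I_m]>> = m -> free [seq f k | k : 'I_m].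
Proof. by move=> e; rewrite /free size_fam e. Qed.

Lemma free_coef_uniq m (f : 'I_m -> vT) : free [seq f k | k : 'I_m] ->
  forall c c' : 'I_m -> F, \sum_k c k *: f k = \sum_k c' k *: f k -> c =1 c'.
Proof.
have -> : [seq f k | k : 'I_m] = [tuple f k | k < m].
  by rewrite /= -val_ord_tuple.
move/freeP => fr c c' e k; apply/eqP; rewrite -subr_eq0; apply/eqP.
apply: (fr (fun k => c k - c' k)).
under eq_bigr do rewrite nth_mktuple scalerBl.
by rewrite sumrB e subrr.
Qed.

End Families.

Section SpanRank.
Variable F : fieldType.

Lemma rank_same_rows c m1 m2 (A : 'M[F]_(m1, c)) (B : 'M[F]_(m2, c)) :
  (forall i, exists j, row i A = row j B) ->
  (forall j, exists i, row j B = row i A) -> \rank A = \rank B.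
Proof.
have sub m3 m4 (X : 'M[F]_(m3, c)) (Y : 'M[F]_(m4, c)) :
    (forall i, exists j, row i X = row j Y) -> (X <= Y)%MS.
  by move=> h; apply/row_subP => i; have [j ->] := h i; apply: row_sub.
by move=> h1 h2; apply/eqmx_rank/andP; split; apply: sub.
Qed.

Variables n q : nat.
Import VectorInternalTheory.

(* the internal coordinates v2r of 'M_(n, q) and mxvec differ by invertible
   right multiplications, hence give the same rank *)
Lemma rank_v2r k (f : 'I_k -> 'M[F]_(n, q)) :
  \rank (\matrix_i v2r (f i)) = \rank (\matrix_i mxvec (f i)).
Proof.
pose P : 'M[F]_(n * q, n * q) :=
  \matrix_(r < n * q) v2r (vec_mx (delta_mx 0 r) : 'M[F]_(n, q)).
pose Q : 'M[F]_(n * q, n * q) :=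
  \matrix_(r < n * q) mxvec (@r2v F 'M[F]_(n, q) (delta_mx 0 r)).
have hP (u : 'M[F]_(n, q)) : v2r u = mxvec u *m P.
  rewrite -{1}(mxvecK u) {1}(row_sum_delta (mxvec u)) !linear_sum mulmx_sum_row.
  by apply: eq_bigr => r _; rewrite !linearZ rowK.
have hQ (w : 'rV[F]_(n * q)) : mxvec (@r2v F 'M[F]_(n, q) w) = w *m Q.
  rewrite {1}(row_sum_delta w) !linear_sum mulmx_sum_row.
  by apply: eq_bigr => r _; rewrite !linearZ rowK.
set M := \matrix_i mxvec (f i).
have E1 : \matrix_i v2r (f i) = M *m P.
  by apply/row_matrixP => i; rewrite row_mul !rowK hP.
have E2 : M = (M *m P) *m Q.
  by apply/row_matrixP => i; rewrite !row_mul !rowK -hP -hQ v2rK.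
apply/eqP; rewrite eqn_leq E1 mxrankM_maxl /=.
by rewrite {1}E2 mxrankM_maxl.
Qed.

Lemma dim_span_rank (X : seq 'M[F]_(n, q)) :
  \dim <<X>>%VS = \rank (\matrix_(i < size X) mxvec X`_i).
Proof.
rewrite [span]unlock /dimv /span_expanded_def /= mxrank_gen /b2mx.
have -> : \matrix_i v2r (tnth (in_tuple X) i) = \matrix_(i < size X) v2r X`_i.
  by apply/matrixP => i j; rewrite !mxE (tnth_nth 0).
exact: rank_v2r.
Qed.

End SpanRank.

Lemma mul_delta_entry (F : fieldType) p1 p2 p3 p4 (X : 'M[F]_(p1, p2))
  (b : 'I_p2) (j : 'I_p3) (Y : 'M[F]_(p3, p4)) a i :
  (X *m delta_mx b j *m Y) a i = X a b * Y j i.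
Proof.
rewrite -(mul_delta_mx (0 : 'I_1)) mulmxA -colE -mulmxA -rowE.
by rewrite !mxE big_ord1 !mxE.
Qed.

Section LinearMap.
Variables (F : fieldType) (n q : nat) (L : 'M[F]_q -> 'M[F]_n).

Lemma LblkE i j a b : Lblk L i j a b = L (delta_mx b j) a i.
Proof.
rewrite /Lblk /matricization !mxE /lin_mx /lin1_mx.
by rewrite /= vec_mx_delta mxvecE mxE trmx_delta.
Qed.

Local Notation s1 := (@tagnat.sig1 q (fun _ => n)).
Local Notation s2 := (@tagnat.sig2 q (fun _ => n)).
Local Notation Rk := (@tagnat.Rank q (fun _ => n)).

Lemma s2Rk (b : 'I_q) (a : 'I_n) : s2 (Rk b a) = a.
Proof. by apply: val_inj; rewrite tagnat.Rank2K. Qed.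

(* Fact 1: the columns of the Choi matrix are the vectorized blocks L_ij *)
Lemma dim_Lspan : \dim (Lspan L) = \rank (choi L).
Proof.
set X := [seq Lblk L ij.1 ij.2 | ij : 'I_n * 'I_q].
rewrite /Lspan dim_span_rank -/X.
pose D := \matrix_(t < \sum_(j < q) n, c < n * q) mxvec (Lblk L (s2 t) (s1 t)) 0 c.
have -> : \rank (choi L) = \rank D^T.
  apply: rank_same_rows => [s|c].
    exists (mxvec_index (s2 s) (s1 s)); apply/rowP => t.
    by rewrite !mxE mxvecE LblkE.
  case/mxvec_indexP: c => a b; exists (Rk b a); apply/rowP => t.
  by rewrite !mxE mxvecE LblkE tagnat.Rank1K s2Rk.
rewrite mxrank_tr; apply: rank_same_rows => [i|t].
  have : X`_i \in X by rewrite mem_nth.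
  case/mapP => ij _ e; exists (Rk ij.2 ij.1); apply/rowP => c.
  by rewrite !mxE e tagnat.Rank1K s2Rk.
have hx : Lblk L (s2 t) (s1 t) \in X.
  by apply/mapP; exists (s2 t, s1 t); rewrite ?mem_enum.
have hi : (index (Lblk L (s2 t) (s1 t)) X < size X)%N by rewrite index_mem.
by exists (Ordinal hi); apply/rowP => c; rewrite !mxE nth_index.
Qed.

Hypothesis Llin : is_linear_map L.

Lemma L0 : L 0 = 0.
Proof.
apply: (addrI (L 0)); rewrite addr0 -{1}[L 0]scale1r -Llin.
by rewrite scale1r addr0.
Qed.

Lemma LD U V : L (U + V) = L U + L V.
Proof. by rewrite -{1}[U]scale1r Llin scale1r. Qed.

Lemma LZ a U : L (a *: U) = a *: L U.
Proof. by rewrite -[a *: U]addr0 Llin L0 addr0. Qed.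

Lemma L_expand V : L V = \sum_(b < q) \sum_(j < q) V b j *: L (delta_mx b j).
Proof.
rewrite {1}(matrix_sum_delta V) (big_morph L LD L0); apply: eq_bigr => b _.
by rewrite (big_morph L LD L0); apply: eq_bigr => j _; rewrite LZ.
Qed.

End LinearMap.

Section Hill.
Variables (F : fieldType) (cj : F -> F).
Hypothesis cjD : forall x y, cj (x + y) = cj x + cj y.
Hypothesis cjM : forall x y, cj (x * y) = cj x * cj y.
Hypothesis cj1 : cj 1 = 1.
Hypothesis cjK : forall x, cj (cj x) = x.

Lemma cj0 : cj 0 = 0.
Proof. by apply: (addrI (cj 0)); rewrite -cjD !addr0. Qed.

Lemma cj_sum (I : Type) (r : seq I) (P : pred I) (f : I -> F) :
  cj (\sum_(i <- r | P i) f i) = \sum_(i <- r | P i) cj (f i).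
Proof. exact: (big_morph cj cjD cj0). Qed.

Lemma ctr_delta p (b j : 'I_p) : ctr cj (delta_mx b j) = delta_mx j b.
Proof.
apply/matrixP => x y; rewrite !mxE andbC.
by case: (_ && _) => /=; rewrite ?cj1 ?cj0.
Qed.

Variables (n q : nat) (L : 'M[F]_q -> 'M[F]_n).
Hypothesis Llin : is_linear_map L.
Hypothesis Lstar : star_linear cj L.

Lemma LblkH (i a : 'I_n) (j b : 'I_q) : Lblk L a b i j = cj (Lblk L i j a b).
Proof. by rewrite !LblkE -ctr_delta Lstar !mxE. Qed.

Lemma hill_Lblk m (A : 'I_m -> 'M[F]_(n, q)) H : hill_rep cj L A H ->
  forall i j, Lblk L i j = \sum_l (\sum_k H k l * cj (A k i j)) *: A l.
Proof.
move=> hr i j; apply/matrixP => a b; rewrite LblkE hr summxE.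
under eq_bigr do rewrite summxE.
rewrite summxE exchange_big; apply: eq_bigr => l _; rewrite mxE mulr_suml.
by apply: eq_bigr => k _; rewrite mxE mul_delta_entry !mxE; ring.
Qed.

Lemma Lspan_sub m (A : 'I_m -> 'M[F]_(n, q)) H : hill_rep cj L A H ->
  (Lspan L <= spanA A)%VS.
Proof.
move=> hr; apply/span_subvP => x /mapP [[i j] _ ->] /=.
by rewrite (hill_Lblk hr); apply: mem_span_fam.
Qed.

Lemma hill_min m (A : 'I_m -> 'M[F]_(n, q)) H : hill_rep cj L A H ->
  (\dim (Lspan L) <= m)%N.
Proof. by move=> hr; apply: leq_trans (dimvS (Lspan_sub hr)) (dim_span_fam _). Qed.

Section Basis.
Variable m : nat.
Hypothesis hm : m = \dim (Lspan L).
Variable A : 'I_m -> 'M[F]_(n, q).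
Hypothesis hA : spanA A = Lspan L.

Lemma freeA : free [seq A k | k : 'I_m].
Proof. by apply: free_fam_dim; rewrite -/(spanA A) hA hm. Qed.

Lemma Lblk_in i j : Lblk L i j \in Lspan L.
Proof. exact: (mem_fam (fun ij : 'I_n * 'I_q => Lblk L ij.1 ij.2) (i, j)). Qed.

Lemma coordA i j :
  (exists lam : 'I_m -> F, Lblk L i j = \sum_(k < m) lam k *: A k) /\
  (forall lam lam' : 'I_m -> F,
     Lblk L i j = \sum_(k < m) lam k *: A k ->
     Lblk L i j = \sum_(k < m) lam' k *: A k -> lam =1 lam').
Proof.
split; first by apply: span_coef; rewrite -/(spanA A) hA Lblk_in.
by move=> lam lam' e1 e2; apply: (free_coef_uniq freeA); rewrite -e1 -e2.
Qed.

Section Coordinates.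
Variable lam : 'I_n -> 'I_q -> 'I_m -> F.
Hypothesis hlam : forall i j, Lblk L i j = \sum_(k < m) lam i j k *: A k.
Let Ls := fun k : 'I_m => \matrix_(i < n, j < q) cj (lam i j k).

Lemma Lblk_Ls i j : Lblk L i j = \sum_l cj (A l i j) *: Ls l.
Proof.
apply/matrixP => a b; rewrite (LblkH a i b j) hlam !summxE cj_sum.
by apply: eq_bigr => l _; rewrite !mxE cjM mulrC.
Qed.

Lemma spanLs : spanA Ls = Lspan L.
Proof.
apply/esym/eqP; rewrite eqEdim; apply/andP; split.
  apply/span_subvP => x /mapP [[i j] _ ->] /=.
  by rewrite Lblk_Ls; apply: mem_span_fam.
by rewrite -hm dim_span_fam.
Qed.

Lemma freeLs : free [seq Ls k | k : 'I_m].
Proof. by apply: free_fam_dim; rewrite -/(spanA Ls) spanLs hm. Qed.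

Lemma alpha_ex : exists alpha : 'I_n -> 'I_q -> 'I_m -> F,
  forall i j, Lblk L i j = \sum_(k < m) alpha i j k *: Ls k.
Proof. by exists (fun i j k => cj (A k i j)) => i j; apply: Lblk_Ls. Qed.

Lemma alpha_uniq (alpha : 'I_n -> 'I_q -> 'I_m -> F) :
  (forall i j, Lblk L i j = \sum_(k < m) alpha i j k *: Ls k) ->
  forall k, \matrix_(i < n, j < q) cj (alpha i j k) = A k.
Proof.
move=> ha k; apply/matrixP => i j; rewrite mxE.
have := free_coef_uniq freeLs (c := alpha i j) (c' := fun l => cj (A l i j)).
by rewrite -ha -Lblk_Ls => /(_ erefl k) ->; rewrite cjK.
Qed.

Lemma B_ex : exists B : 'I_m -> 'M[F]_(n, q),
  forall k, Ls k = \sum_(i < n) \sum_(j < q) B k i j *: Lblk L i j.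
Proof.
have : forall k, exists c : 'I_n * 'I_q -> F,
    Ls k = \sum_x c x *: Lblk L x.1 x.2.
  by move=> k; apply: span_coef; rewrite -/(Lspan L) -spanLs mem_fam.
case/fin_all_exists => c hc; exists (fun k => \matrix_(i, j) c k (i, j)) => k.
by rewrite hc pair_big /=; apply: eq_bigr => [[i j]] _; rewrite mxE.
Qed.

Section HillMatrix.
Variable B : 'I_m -> 'M[F]_(n, q).
Hypothesis hB : forall k, Ls k = \sum_(i < n) \sum_(j < q) B k i j *: Lblk L i j.
Let H := hill_matrix cj B Ls.

Lemma H_entry k l : H k l = \sum_i \sum_j B k i j * lam i j l.
Proof.
rewrite /H /hill_matrix /ctr /hadamard /ones mxE !mxE exchange_big.
apply: eq_bigr => j _; rewrite !mxE mulr1; apply: eq_bigr => i _.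
by rewrite !mxE cjK cj1 mul1r.
Qed.

Lemma Ls_H k : Ls k = \sum_l H k l *: A l.
Proof.
rewrite hB.
under eq_bigr do under eq_bigr do rewrite hlam scaler_sumr.
under [RHS]eq_bigr do rewrite H_entry !scaler_suml.
under eq_bigr do rewrite exchange_big.
rewrite exchange_big; apply: eq_bigr => l _.
apply: eq_bigr => i _; rewrite scaler_suml; apply: eq_bigr => j _.
by rewrite scalerA.
Qed.

(* substituting Ls_H into Lblk_Ls and comparing coordinates in the basis A *)
Lemma lam_H i j l : lam i j l = \sum_k cj (A k i j) * H k l.
Proof.
apply: (free_coef_uniq freeA (c := lam i j)
          (c' := fun l => \sum_k cj (A k i j) * H k l)).
rewrite -hlam Lblk_Ls.
under eq_bigr do rewrite Ls_H scaler_sumr.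
rewrite exchange_big; apply: eq_bigr => l' _.
by rewrite scaler_suml; apply: eq_bigr => k _; rewrite scalerA.
Qed.

(* H is Hermitian: conjugating Ls_H gives a second expression of lam^ij_l
   whose difference with lam_H is a vanishing combination of the A_k *)
Lemma H_herm_entry k l : H k l = cj (H l k).
Proof.
pose d k := H k l - cj (H l k).
have hd : forall i j, \sum_k cj (A k i j) * d k = 0.
  move=> i j.
  have e1 : lam i j l = \sum_k cj (H l k) * cj (A k i j).
    have := congr1 (fun M : 'M[F]_(n, q) => cj (M i j)) (Ls_H l).
    rewrite /= mxE cjK => ->; rewrite summxE cj_sum.
    by apply: eq_bigr => k' _; rewrite mxE cjM.
  under eq_bigr do rewrite mulrBr.
  rewrite sumrB -lam_H; under eq_bigr do rewrite mulrC.
  by rewrite -e1 subrr.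
have hz : \sum_k cj (d k) *: A k = \sum_k 0 *: A k.
  rewrite [RHS]big1 => [|k' _]; last by rewrite scale0r.
  apply/matrixP => i j; rewrite summxE mxE.
  rewrite -[LHS]cjK cj_sum.
  under eq_bigr do rewrite mxE cjM cjK mulrC.
  by rewrite hd cj0.
apply: subr0_eq; rewrite -[LHS]cjK -/(d k) (free_coef_uniq freeA hz k).
exact: cj0.
Qed.

Lemma H_herm : ctr cj H = H.
Proof. by apply/matrixP => k l; rewrite [RHS]H_herm_entry /ctr !mxE. Qed.

Lemma hill_delta b j :
  L (delta_mx b j) = \sum_k \sum_l H k l *: (A l *m delta_mx b j *m ctr cj (A k)).
Proof.
apply/matrixP => a i; rewrite -LblkE hlam !summxE.
under eq_bigr do rewrite mxE lam_H mulr_suml.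
rewrite exchange_big; apply: eq_bigr => k _; rewrite summxE.
apply: eq_bigr => l _; rewrite [RHS]mxE mul_delta_entry /ctr !mxE.
by ring.
Qed.

(* both sides of the Hill formula are linear, and agree on matrix units *)
Lemma hillA : hill_rep cj L A H.
Proof.
pose R (V : 'M[F]_q) := \sum_k \sum_l H k l *: (A l *m V *m ctr cj (A k)).
have R0 : R 0 = 0.
  by rewrite /R big1 // => k _; rewrite big1 // => l _; rewrite mulmx0 mul0mx scaler0.
have RD U W : R (U + W) = R U + R W.
  rewrite /R -big_split; apply: eq_bigr => k _; rewrite -big_split.
  by apply: eq_bigr => l _; rewrite mulmxDr mulmxDl scalerDr.
have RZ a U : R (a *: U) = a *: R U.
  rewrite /R scaler_sumr; apply: eq_bigr => k _; rewrite scaler_sumr.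
  apply: eq_bigr => l _; rewrite -(scalemxAr a (A l)) -(scalemxAl a) !scalerA.
  by rewrite mulrC.
move=> V; rewrite -/(R V) (L_expand Llin) {2}(matrix_sum_delta V).
rewrite (big_morph R RD R0); apply: eq_bigr => b _.
rewrite (big_morph R RD R0); apply: eq_bigr => j _.
by rewrite RZ hill_delta.
Qed.

Lemma stack_eq : stack Ls = kron_I n H *m stack A.
Proof.
rewrite /stack /kron_I mul_mxblock_mxrow; apply: eq_mxcol => k.
by rewrite Ls_H; apply: eq_bigr => l _; rewrite mul_scalar_mx.
Qed.

End HillMatrix.
End Coordinates.

Lemma partA : forall lam : 'I_n -> 'I_q -> 'I_m -> F,
       (forall i j, Lblk L i j = \sum_(k < m) lam i j k *: A k) ->
       let Ls := fun k : 'I_m => \matrix_(i < n, j < q) cj (lam i j k) in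
       spanA Ls = Lspan L /\
       (exists alpha : 'I_n -> 'I_q -> 'I_m -> F,
          forall i j, Lblk L i j = \sum_(k < m) alpha i j k *: Ls k) /\
       (forall alpha : 'I_n -> 'I_q -> 'I_m -> F,
          (forall i j, Lblk L i j = \sum_(k < m) alpha i j k *: Ls k) ->
          forall k, \matrix_(i < n, j < q) cj (alpha i j k) = A k) /\
       (exists B : 'I_m -> 'M[F]_(n, q),
          forall k, Ls k = \sum_(i < n) \sum_(j < q) B k i j *: Lblk L i j) /\
       (forall B : 'I_m -> 'M[F]_(n, q),
          (forall k, Ls k = \sum_(i < n) \sum_(j < q) B k i j *: Lblk L i j) ->
          let H := hill_matrix cj B Ls in
          [/\ ctr cj H = H,
              minimal_hill_rep cj L A H &
              stack Ls = kron_I n H *m stack A]).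
Proof.
move=> lam hlam Ls.
split; first exact: spanLs.
split; first exact: alpha_ex.
split; first exact: alpha_uniq.
split; first exact: B_ex.
move=> B hB H; split; [exact: H_herm | split | exact: stack_eq].
  exact: hillA.
by move=> m' A' H' hr; rewrite hm; apply: hill_min hr.
Qed.

Lemma hill_rep_basis : exists H, hill_rep cj L A H.
Proof.
have : forall i, exists f : 'I_q -> 'I_m -> F,
    forall j, Lblk L i j = \sum_k f j k *: A k.
  by move=> i; apply: fin_all_exists (fun j => (coordA i j).1).
case/fin_all_exists => lam hlam; have [B hB] := B_ex hlam.
by exists (hill_matrix cj B (fun k => \matrix_(i, j) cj (lam i j k))); apply: hillA.
Qed.

End Basis.

Lemma minimal_hill_dim m (A : 'I_m -> 'M[F]_(n, q)) H :
  minimal_hill_rep cj L A H -> m = \dim (Lspan L).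
Proof.
case=> hr hmin; apply/eqP; rewrite eqn_leq (hill_min hr) andbT.
pose A0 k := tnth (vbasis (Lspan L)) k.
have hA0 : spanA A0 = Lspan L.
  rewrite /spanA (_ : [seq A0 k | k : 'I__] = vbasis (Lspan L)).
    exact/span_basis/vbasisP.
  by rewrite -[RHS]map_tnth_enum.
by have [H0 /hmin] := hill_rep_basis (erefl _) hA0.
Qed.

Lemma partB m (A : 'I_m -> 'M[F]_(n, q)) H :
  minimal_hill_rep cj L A H -> spanA A = Lspan L.
Proof.
move=> hmin; have hm := minimal_hill_dim hmin; case: hmin => hr _.
apply/esym/eqP; rewrite eqEdim (Lspan_sub hr) /= -hm.
exact: dim_span_fam.
Qed.

End Hill.

Lemma theorem5p8_conj (F : fieldType) (cj : F -> F)
  (cjD : forall x y, cj (x + y) = cj x + cj y)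
  (cjM : forall x y, cj (x * y) = cj x * cj y)
  (cj1 : cj 1 = 1) (cjK : forall x, cj (cj x) = x) :
  theorem5p8_body cj.
Proof.
move=> n q L Llin Lstar m hm.
have hm' : m = \dim (Lspan L) by rewrite hm dim_Lspan.
split; last by move=> m' A H; apply: partB.
move=> A hA; split; first by move=> i j; apply: (coordA hm' hA).
exact: (partA cjD cjM cj1 cjK Llin Lstar hm' hA).
Qed.

Theorem theorem5p8 :
  (forall C : numClosedFieldType, theorem5p8_body (@Num.conj C)) /\
  (forall R : realFieldType, theorem5p8_body (fun x : R => x)).
Proof.
split; last by move=> R; apply: theorem5p8_conj.
move=> C; apply: theorem5p8_conj; [exact: rmorphD | exact: rmorphM |
                                   exact: rmorph1 | exact: conjCK].
Qed.
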